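(* For $i\in\{1,\dots,m\}$ let $f_i:\mathbb{R}^n\to\mathbb{R}\cup\{\infty\}$ be proper, lower semicontinuous, and prox-bounded with threshold $r_i$. Let $r>\max_i\{r_i\}$ and define $F(x,\lambda):=-\sum_{i=1}^m\lambda_ie_rf_i(x)$. Suppose $P_rf_i$ is single-valued and Lipschitz continuous for all $i$. Then, for any $(\bar x,\bar\lambda)$ and $\bar v\in\partial_xF(\bar x,\bar\lambda)$, the following hold: (1) $(0,\lambda')\in D^*(\partial_xF)(\bar x,\bar\lambda\,|\,\bar v)(0)\Rightarrow \lambda'=0$; (2) for some $\rho>0$, $(x',\lambda')\in D^*(\partial_xF)(\bar x,\bar\lambda\,|\,\bar v)(v')$ with $v'\neq 0$ implies $\langle x',v'\rangle>-\rho|v'|^2$; (3) the set-valued mapping $\partial_xF(\bar x,\cdot)$ has a continuous selection $g$ near $\bar\lambda$.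
   Context: Moreau envelope $e_rf(x)=\inf_y\{f(y)+\frac r2|y-x|^2\}$ and proximal mapping $P_rf(x)=\operatorname{argmin}_y\{f(y)+\frac r2|y-x|^2\}$. $f$ is prox-bounded if $e_rf(\bar x)>-\infty$ for some $r>0$ and $\bar x$; the infimum of such $r$ is the threshold. $\partial_x$ is the subdifferential in $x$, and $\partial_xF$ is regarded as the set-valued mapping $(x,\lambda)\mapsto\partial_xF(x,\lambda)$. For a set-valued mapping $S$ and $\bar y\in S(\bar z)$, the coderivative is $D^*S(\bar z|\bar y)(w)=\{z': (z',-w)\in N_{\operatorname{gph}S}(\bar z,\bar y)\}$, with $N$ the limiting normal cone. *)

(* R^n is rendered as row vectors 'rV[R]_n. *)
From HB Require Import structures.
From mathcomp Require Import all_boot all_order all_algebra.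
From mathcomp Require Import all_classical all_reals all_analysis.
Set Implicit Arguments. Unset Strict Implicit. Unset Printing Implicit Defensive.
Import Order.TTheory GRing.Theory Num.Theory.
Import numFieldNormedType.Exports.
Local Open Scope classical_set_scope.
Local Open Scope ring_scope.

Section Defs.
Variable R : realType.

Definition dotv k (u v : 'rV[R]_k) : R := \sum_(i < k) u ord0 i * v ord0 i.
Definition enorm k (u : 'rV[R]_k) : R := Num.sqrt (dotv u u).

Definition proper_fun n (f : 'rV[R]_n -> \bar R) : Prop :=
  (forall x, (-oo < f x)%E) /\ exists x, (f x < +oo)%E.

Definition moreau_obj n (f : 'rV[R]_n -> \bar R) (r : R) (x y : 'rV[R]_n) : \bar R :=
  (f y + (r / 2 * enorm (y - x) ^+ 2)%:E)%E.
Definition moreau_env n (f : 'rV[R]_n -> \bar R) (r : R) (x : 'rV[R]_n) : \bar R :=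
  ereal_inf [set moreau_obj f r x y | y in setT].

(* proximal mapping P_r f(x) = argmin_y {...}  (empty if the infimum is +oo) *)
Definition prox_map n (f : 'rV[R]_n -> \bar R) (r : R) (x : 'rV[R]_n) : set 'rV[R]_n :=
  [set y | moreau_obj f r x y = moreau_env f r x /\ (moreau_env f r x < +oo)%E].

Definition prox_ok n (f : 'rV[R]_n -> \bar R) (r : R) : Prop :=
  0 < r /\ exists x, (-oo < moreau_env f r x)%E.
Definition prox_bounded n (f : 'rV[R]_n -> \bar R) : Prop := exists r, prox_ok f r.
Definition prox_threshold n (f : 'rV[R]_n -> \bar R) : \bar R :=
  ereal_inf [set r%:E | r in prox_ok f].

Definition regular_subdiff n (g : 'rV[R]_n -> R) (x : 'rV[R]_n) : set 'rV[R]_n :=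
  [set v | forall eps : R, 0 < eps ->
     \forall y \near x, g x + dotv v (y - x) - eps * enorm (y - x) <= g y].
Definition limiting_subdiff n (g : 'rV[R]_n -> R) (x : 'rV[R]_n) : set 'rV[R]_n :=
  [set v | exists (xk vk : nat -> 'rV[R]_n),
     [/\ xk @ \oo --> x, (g \o xk) @ \oo --> g x, vk @ \oo --> v
       & forall k, regular_subdiff g (xk k) (vk k)]].

Definition regular_normal k (C : set 'rV[R]_k) (z : 'rV[R]_k) : set 'rV[R]_k :=
  [set v | C z /\ forall eps : R, 0 < eps ->
     \forall z' \near z, C z' -> dotv v (z' - z) <= eps * enorm (z' - z)].
Definition limiting_normal k (C : set 'rV[R]_k) (z : 'rV[R]_k) : set 'rV[R]_k :=
  [set v | C z /\ exists (zk vk : nat -> 'rV[R]_k),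
     [/\ zk @ \oo --> z, vk @ \oo --> v
       & forall j, regular_normal C (zk j) (vk j)]].

Definition gph a b (S : 'rV[R]_a -> set 'rV[R]_b) : set 'rV[R]_(a + b) :=
  [set w | exists (z : 'rV[R]_a) (y : 'rV[R]_b), S z y /\ w = row_mx z y].
Definition coderiv a b (S : 'rV[R]_a -> set 'rV[R]_b) (z : 'rV[R]_a) (y : 'rV[R]_b)
  (w : 'rV[R]_b) : set 'rV[R]_a :=
  [set z' | limiting_normal (gph S) (row_mx z y) (row_mx z' (- w))].

(* F(x, lambda) = - sum_i lambda_i e_r f_i(x)  (envelopes are finite under the hypotheses) *)
Definition Fsum n m (f : 'I_m -> 'rV[R]_n -> \bar R) (r : R)
  (x : 'rV[R]_n) (l : 'rV[R]_m) : R :=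
  - \sum_(i < m) l ord0 i * fine (moreau_env (f i) r x).

(* partial subdifferential in x, as a mapping (x, lambda) |-> d_x F(x, lambda);
   the pair (x, lambda) is encoded as row_mx x lambda *)
Definition subdiffx n m (f : 'I_m -> 'rV[R]_n -> \bar R) (r : R)
  (z : 'rV[R]_(n + m)) : set 'rV[R]_n :=
  limiting_subdiff (fun x => Fsum f r x (rsubmx z)) (lsubmx z).

End Defs.

From HB Require Import structures.
From mathcomp Require Import all_boot all_order all_algebra.
From mathcomp Require Import all_classical all_reals all_analysis.
From mathcomp Require Import ring lra.
Import Order.TTheory GRing.Theory Num.Theory.
Import numFieldNormedType.Exports.
Local Open Scope classical_set_scope.
Local Open Scope ring_scope.

(* Since [P_r f_i] is single-valued, comparing the envelope problems at [x] and
   [x + d] through their minimisers gives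
     |e_r f_i (x + d) - e_r f_i x - r <x - P_r f_i x, d>| <= c |d|^2
   once [P_r f_i] is Lipschitz.  Hence [F(., l)] has a quadratic expansion with
   gradient [G(x, l) = - r sum_i l_i (x - P_r f_i x)], so that [d_x F = {G}] is a
   single-valued, locally Lipschitz mapping of [(x, l)].  The coderivative of such
   a mapping satisfies [|(x', l')| <= c |v'|], which gives (1) and (2); (3) holds
   with [g = G(xb, .)]. *)

(* [`|u|] is the max norm of the normed space of matrices, which carries the
   topology; [enorm] is the Euclidean norm used by the definitions. *)
Section RowNorms.
Context {R : realType} {k : nat}.
Implicit Types (u v w : 'rV[R]_k) (c : R).

Lemma row_norm_le u c : 0 <= c -> (forall i, `|u ord0 i| <= c) -> `|u| <= c.
Proof.
move=> c0 uc; change (mx_norm u <= c); rewrite mx_normrE.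
by apply/bigmax_leP; split=> // -[i j] _; rewrite (ord1 i).
Qed.

Lemma row_entry_le_norm u i : `|u ord0 i| <= `|u|.
Proof.
change (`|u ord0 i| <= mx_norm u); rewrite mx_normrE.
by apply/bigmax_geP; right; exists (ord0, i).
Qed.

Lemma dotvC u v : dotv u v = dotv v u.
Proof. by apply: eq_bigr => i _; rewrite mulrC. Qed.

Lemma dotvDl u v w : dotv (u + v) w = dotv u w + dotv v w.
Proof. by rewrite /dotv -big_split; apply: eq_bigr => i _; rewrite mxE mulrDl. Qed.

Lemma dotvZl a u v : dotv (a *: u) v = a * dotv u v.
Proof. by rewrite /dotv mulr_sumr; apply: eq_bigr => i _; rewrite mxE mulrA. Qed.

Lemma dotvNl u v : dotv (- u) v = - dotv u v.
Proof. by rewrite -scaleN1r dotvZl mulN1r. Qed.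

Lemma dotvBl u v w : dotv (u - v) w = dotv u w - dotv v w.
Proof. by rewrite dotvDl dotvNl. Qed.

Lemma dotvNr u v : dotv u (- v) = - dotv u v.
Proof. by rewrite dotvC dotvNl dotvC. Qed.

Lemma dotvZr a u v : dotv u (a *: v) = a * dotv u v.
Proof. by rewrite dotvC dotvZl dotvC. Qed.

Lemma dotvBr u v w : dotv u (v - w) = dotv u v - dotv u w.
Proof. by rewrite dotvC dotvBl !(dotvC u). Qed.

Lemma dotv_suml m (F : 'I_m -> 'rV[R]_k) v :
  dotv (\sum_(j < m) F j) v = \sum_(j < m) dotv (F j) v.
Proof.
by rewrite /dotv exchange_big; apply: eq_bigr => i _; rewrite summxE mulr_suml.
Qed.

Lemma dotvv_ge0 u : 0 <= dotv u u.
Proof. by apply: sumr_ge0 => i _; rewrite -expr2 sqr_ge0. Qed.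

Lemma normr_dotv_le u v : `|dotv u v| <= k%:R * (`|u| * `|v|).
Proof.
apply: le_trans (ler_norm_sum _ _ _) _.
rewrite mulr_natl -[X in _ *+ X]card_ord -sumr_const.
by apply: ler_sum => i _; rewrite normrM ler_pM ?row_entry_le_norm.
Qed.

Lemma enorm_ge0 u : 0 <= enorm u.
Proof. exact: sqrtr_ge0. Qed.

Lemma enorm_sqr u : enorm u ^+ 2 = dotv u u.
Proof. by rewrite sqr_sqrtr // dotvv_ge0. Qed.

Lemma norm_le_enorm u : `|u| <= enorm u.
Proof.
apply: row_norm_le (enorm_ge0 u) _ => i.
rewrite -(ler_pXn2r (_ : (0 < 2)%N)) ?nnegrE ?enorm_ge0 // enorm_sqr.
rewrite /dotv (bigD1 i) //= real_normK ?num_real // expr2 lerDl.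
by apply: sumr_ge0 => j _; rewrite -expr2 sqr_ge0.
Qed.

Lemma enorm_le_norm u : enorm u <= k%:R * `|u|.
Proof.
rewrite -(ler_pXn2r (_ : (0 < 2)%N)) ?nnegrE ?mulr_ge0 ?enorm_ge0 //.
rewrite enorm_sqr exprMn; apply: le_trans (ler_norm _) _.
apply: le_trans (normr_dotv_le u u) _; rewrite -expr2 ler_wpM2r ?exprn_ge0 //.
by rewrite -natrX ler_nat; case: k => // k'; rewrite expnS leq_pmulr.
Qed.

Lemma enorm_gt0 u : (0 < enorm u) = (u != 0).
Proof.
apply/idP/idP => [|u0]; last by apply: lt_le_trans (norm_le_enorm u); rewrite normr_gt0.
apply: contraTneq => ->.
by rewrite /enorm /dotv big1 ?sqrtr0 ?ltxx // => i _; rewrite mxE mul0r.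
Qed.

Lemma enormZ a u : enorm (a *: u) = `|a| * enorm u.
Proof. by rewrite /enorm dotvZl dotvZr mulrA -expr2 sqrtrM ?sqr_ge0 // sqrtr_sqr. Qed.

Lemma sqr_norm_le_dotvv u : `|u| ^+ 2 <= dotv u u.
Proof. by rewrite -enorm_sqr ler_pXn2r ?nnegrE ?enorm_ge0 ?norm_le_enorm. Qed.

Lemma dotv_lower_bound (x v : 'rV[R]_k) c :
  0 <= c -> v != 0 -> `|x| <= c * `|v| -> - (k%:R * c + 1) * enorm v ^+ 2 < dotv x v.
Proof.
move=> c0 v0 xv; have := normr_dotv_le x v; rewrite ler_norml => /andP[low _].
have : k%:R * (`|x| * `|v|) <= k%:R * c * enorm v ^+ 2.
  rewrite -mulrA; apply: ler_wpM2l => //.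
  apply: le_trans (ler_wpM2r (normr_ge0 v) xv) _; rewrite -mulrA.
  apply: (ler_wpM2l c0); rewrite -expr2 ler_pXn2r ?nnegrE ?enorm_ge0 //.
  exact: norm_le_enorm.
have : 0 < enorm v ^+ 2 by rewrite exprn_gt0 // enorm_gt0.
lra.
Qed.

End RowNorms.

Section RowBlocks.
Context {R : realType} {a b : nat}.

Lemma norm_lsubmx_le (z : 'rV[R]_(a + b)) : `|lsubmx z| <= `|z|.
Proof. by apply: row_norm_le => // j; rewrite mxE row_entry_le_norm. Qed.

Lemma norm_rsubmx_le (z : 'rV[R]_(a + b)) : `|rsubmx z| <= `|z|.
Proof. by apply: row_norm_le => // j; rewrite mxE row_entry_le_norm. Qed.

Lemma norm_row_mx_le (u : 'rV[R]_a) (v : 'rV[R]_b) : `|row_mx u v| <= `|u| + `|v|.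
Proof.
apply: row_norm_le => [|j]; first by rewrite addr_ge0.
case: (split_ordP j) => i ->; rewrite (row_mxEl, row_mxEr).
  by rewrite (le_trans (row_entry_le_norm u i)) // lerDl.
by rewrite (le_trans (row_entry_le_norm v i)) // lerDr.
Qed.

Lemma dotv_row_mx (u1 v1 : 'rV[R]_a) (u2 v2 : 'rV[R]_b) :
  dotv (row_mx u1 u2) (row_mx v1 v2) = dotv u1 v1 + dotv u2 v2.
Proof.
rewrite /dotv big_split_ord; congr (_ + _); apply: eq_bigr => i _.
  by rewrite !row_mxEl.
by rewrite !row_mxEr.
Qed.

End RowBlocks.

Lemma lipschitzP {K : numFieldType} {V W : normedModType K} [g : V -> W] :
  lipschitz g -> exists2 c : K, 0 <= c & forall x y, `|g x - g y| <= c * `|x - y|.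
Proof.
move=> /pinfty_ex_gt0[c c0 gc]; exists c => [|x y]; first exact: ltW.
exact: (gc (x, y)).
Qed.

Lemma klipschitz_continuous {K : realFieldType} {V W : normedModType K}
    [g : V -> W] [c : K] :
  (forall x y, `|g x - g y| <= c * `|x - y|) -> continuous g.
Proof.
move=> gc x; apply/cvgrPdist_lt => e e0; apply/nbhs_normP.
exists (e / (`|c| + 1)) => [|y /= xy]; first by rewrite /= divr_gt0 // ltr_pwDr.
apply: le_lt_trans (gc x y) _; apply: le_lt_trans (_ : `|c| * `|x - y| < e).
  by rewrite ler_wpM2r // ler_norm.
move: xy; rewrite ltr_pdivlMr ?ltr_pwDr //.
have := normr_ge0 (x - y); have := normr_ge0 c; nra.
Qed.

Lemma exists_pos_mul_lt {K : numFieldType} [s c : K] :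
  0 <= s -> 0 < c -> exists2 t : K, 0 < t & t * s < c.
Proof.
move=> s0 c0; exists (c / (s + 1)); first by rewrite divr_gt0 // ltr_pwDr.
by rewrite mulrAC ltr_pdivrMr ?ltr_pwDr // ltr_pM2l // ltrDl.
Qed.

Section QuadraticExpansion.
Context {R : realType} {n : nat}.
Context {g : 'rV[R]_n -> R} {x v : 'rV[R]_n} {K : R}.
Hypothesis K_ge0 : 0 <= K.
Hypothesis g_quad : forall d, `|g (x + d) - g x - dotv v d| <= K * `|d| ^+ 2.

Lemma regular_subdiff_quadratic_mem : regular_subdiff g x v.
Proof.
move=> e e0; apply/nbhs_normP; exists (e / (K + 1)) => [|y /= xy].
  by rewrite /= divr_gt0 // ltr_pwDr.
have := g_quad (y - x); rewrite subrKC ler_norml => /andP[+ _].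
have Kd : K * `|y - x| <= e.
  move: xy; rewrite distrC ltr_pdivlMr ?ltr_pwDr //.
  by have := normr_ge0 (y - x); nra.
have : K * `|y - x| ^+ 2 <= e * enorm (y - x).
  rewrite expr2 mulrA (le_trans (ler_wpM2r _ Kd)) //.
  by rewrite ler_wpM2l ?norm_le_enorm // ltW.
lra.
Qed.

Lemma regular_subdiff_quadratic_eq u : regular_subdiff g x u -> u = v.
Proof.
move=> u_reg; apply: subr0_eq; apply/eqP/negPn/negP => w0; set w := u - v in w0.
have ew : 0 < enorm w by rewrite enorm_gt0.
suff : enorm w <= 0 by rewrite leNgt ew.
apply/ler_addgt0Pr => e e0; rewrite add0r.
have e2 : 0 < e / 2 by rewrite divr_gt0.
have /nbhs_normP[δ δ0 near_x] := u_reg _ e2.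
have δe0 : 0 < Num.min δ (e / 2) by rewrite lt_min e2 andbT; exact: δ0.
have [t t0] := exists_pos_mul_lt (mulr_ge0 (enorm_ge0 w) (addr_ge0 ler01 K_ge0)) δe0.
rewrite lt_min !mulrA => /andP[tδ te].
set q := t * enorm w in tδ te *; have q0 : 0 < q by rewrite mulr_gt0.
have tw : `|t *: w| <= q.
  by rewrite normrZ gtr0_norm //; apply: (ler_wpM2l (ltW t0)); exact: norm_le_enorm.
have step : x + t *: w - x = t *: w by rewrite addrAC subrr add0r.
have lower : g x + t * dotv u w - e / 2 * q <= g (x + t *: w).
  have := near_x (x + t *: w); rewrite /= step enormZ gtr0_norm // dotvZr; apply.
  rewrite -normrN opprB step; apply: le_lt_trans tw _.
  by apply: le_lt_trans tδ; rewrite ler_peMr ?(ltW q0) // lerDl.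
have upper : g (x + t *: w) <= g x + t * dotv v w + K * q ^+ 2.
  have := g_quad (t *: w); rewrite ler_norml dotvZr => /andP[_].
  suff : K * `|t *: w| ^+ 2 <= K * q ^+ 2 by lra.
  by apply: (ler_wpM2l K_ge0); rewrite ler_pXn2r ?nnegrE ?(ltW q0).
have : q * enorm w <= q * (e / 2 + K * q).
  have -> : q * enorm w = t * dotv u w - t * dotv v w.
    by rewrite -mulrBr -dotvBl -enorm_sqr /q -mulrA.
  lra.
rewrite ler_pM2l // => ew_le; have : K * q < e / 2 by nra.
lra.
Qed.

Lemma regular_subdiff_quadratic : regular_subdiff g x = [set v].
Proof.
apply/seteqP; split=> [u /regular_subdiff_quadratic_eq //|_ ->].
exact: regular_subdiff_quadratic_mem.
Qed.

End QuadraticExpansion.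

Lemma limiting_subdiff_continuous {R : realType} {n : nat} [g : 'rV[R]_n -> R]
    (G : 'rV[R]_n -> 'rV[R]_n) :
  (forall x, regular_subdiff g x = [set G x]) -> continuous G ->
  forall x, limiting_subdiff g x = [set G x].
Proof.
move=> regG cG x; apply/seteqP; split=> [v [xk [vk [xk_x _ vk_v vk_reg]]]|_ ->].
  have vkE : vk = G \o xk by apply/funext => k; move: (vk_reg k); rewrite regG.
  have vk_G : vk @ \oo --> G x by rewrite vkE; apply: cvg_comp xk_x (cG x).
  exact: cvg_unique vk_v vk_G.
exists (cst x), (cst (G x)); split=> [|||k]; try exact: cvg_cst.
- by rewrite /comp /cst; exact: cvg_cst.
- by rewrite /= regG.
Qed.

Section MoreauEnvelope.
Context {R : realType} {n : nat}.
Context {f : 'rV[R]_n -> \bar R} {r : R} {p : 'rV[R]_n -> 'rV[R]_n}.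
Hypothesis f_gtNy : forall x, (-oo < f x)%E.
Hypothesis prox_p : forall x, prox_map f r x = [set p x].

Local Notation env x := (fine (moreau_env f r x)).

Lemma moreau_env_prox x :
  moreau_env f r x = (env x)%:E /\ f (p x) = (env x - r / 2 * enorm (p x - x) ^+ 2)%:E.
Proof.
have : prox_map f r x (p x) by rewrite prox_p.
rewrite /prox_map /moreau_obj /=; have := f_gtNy (p x).
case: (f (p x)) => [b| |] //= _ [E lt]; rewrite -E in lt *; last by [].
by rewrite -EFinD /= addrK.
Qed.

Lemma moreau_env_le x y :
  env y <= env x + r / 2 * (enorm (p x - y) ^+ 2 - enorm (p x - x) ^+ 2).
Proof.
have [_ fpx] := moreau_env_prox x; have [ey _] := moreau_env_prox y.
have : (moreau_env f r y <= moreau_obj f r y (p x))%E.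
  by apply: ereal_inf_lbound; exists (p x).
rewrite ey /moreau_obj fpx -EFinD lee_fin; lra.
Qed.

Lemma moreau_env_step x d :
  env (x + d) - env x <= r * dotv (x - p x) d + r / 2 * dotv d d.
Proof.
have := moreau_env_le x (x + d).
have -> : p x - (x + d) = (p x - x) - d by rewrite opprD addrA.
rewrite !enorm_sqr !dotvBl !dotvBr (dotvC d (p x)) (dotvC d x); lra.
Qed.

Context {L : R}.
Hypothesis p_lip : forall x y, `|p x - p y| <= L * `|x - y|.

Lemma moreau_env_quadratic x d :
  `|env (x + d) - env x - r * dotv (x - p x) d| <= `|r| * n%:R * (L + 1) * `|d| ^+ 2.
Proof.
have up := moreau_env_step x d.
have := moreau_env_step (x + d) (- d); rewrite addrK.
have -> : x + d - p (x + d) = (x - p x) + (p x - p (x + d)) + d.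
  by rewrite -(addrA x (- p x)) addKr addrAC.
rewrite 2!dotvDl !dotvNr dotvNl opprK => low.
have rB : `|r * dotv (p x - p (x + d)) d| <= `|r| * n%:R * L * `|d| ^+ 2.
  rewrite normrM -!mulrA; apply: ler_wpM2l => //.
  apply: le_trans (normr_dotv_le _ _) _; apply: ler_wpM2l => //.
  rewrite expr2 mulrA; apply: ler_wpM2r => //.
  by apply: le_trans (p_lip _ _) _; rewrite opprD addrA subrr add0r normrN.
have rD : `|r * dotv d d| <= `|r| * n%:R * `|d| ^+ 2.
  by rewrite normrM -mulrA; apply: ler_wpM2l; rewrite // expr2 normr_dotv_le.
move: rB rD; rewrite !ler_norml => /andP[rB _] /andP[rD rD'].
apply/andP; split; lra.
Qed.

End MoreauEnvelope.

Definition gradF {R : realType} {n m : nat} (r : R) (p : 'I_m -> 'rV[R]_n -> 'rV[R]_n)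
    (x : 'rV[R]_n) (l : 'rV[R]_m) : 'rV[R]_n :=
  \sum_(i < m) (- r * l ord0 i) *: (x - p i x).

Section PartialGradient.
Context {R : realType} {n m : nat} {f : 'I_m -> 'rV[R]_n -> \bar R} {r : R}.
Context {p : 'I_m -> 'rV[R]_n -> 'rV[R]_n} {L : 'I_m -> R}.
Hypothesis f_gtNy : forall i x, (-oo < f i x)%E.
Hypothesis prox_p : forall i x, prox_map (f i) r x = [set p i x].
Hypothesis p_lip : forall i x y, `|p i x - p i y| <= L i * `|x - y|.
Hypothesis L_ge0 : forall i, 0 <= L i.

Lemma Fsum_quadratic x l d :
  `|Fsum f r (x + d) l - Fsum f r x l - dotv (gradF r p x l) d|
    <= (\sum_(i < m) `|l ord0 i| * (`|r| * n%:R * (L i + 1))) * `|d| ^+ 2.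
Proof.
have -> : Fsum f r (x + d) l - Fsum f r x l - dotv (gradF r p x l) d =
    \sum_(i < m) - l ord0 i * (fine (moreau_env (f i) r (x + d))
      - fine (moreau_env (f i) r x) - r * dotv (x - p i x) d).
  rewrite /Fsum /gradF dotv_suml -!sumrN -!big_split /=; apply: eq_bigr => i _.
  by rewrite dotvZl; ring.
rewrite mulr_suml; apply: le_trans (ler_norm_sum _ _ _) _; apply: ler_sum => i _.
rewrite normrM normrN -mulrA; apply: ler_wpM2l => //.
exact (moreau_env_quadratic (f_gtNy i) (prox_p i) (p_lip i) x d).
Qed.

Lemma regular_subdiff_Fsum x l : regular_subdiff (Fsum f r ^~ l) x = [set gradF r p x l].
Proof.
apply: regular_subdiff_quadratic (Fsum_quadratic x l).
by apply: sumr_ge0 => i _; rewrite !mulr_ge0 ?addr_ge0.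
Qed.

Lemma gradF_lipschitz_x l a b :
  `|gradF r p a l - gradF r p b l| <= `|r| * `|l| * (\sum_(i < m) (1 + L i)) * `|a - b|.
Proof.
rewrite /gradF -sumrB mulr_sumr mulr_suml.
apply: le_trans (ler_norm_sum _ _ _) _; apply: ler_sum => i _; rewrite -scalerBr.
have -> : a - p i a - (b - p i b) = (a - b) - (p i a - p i b).
  by rewrite !opprD !opprK addrACA.
rewrite normrZ normrM normrN -!mulrA; apply: ler_wpM2l => //.
apply: ler_pM => //; first exact: row_entry_le_norm.
apply: le_trans (ler_normB _ _) _.
by rewrite mulrDl mul1r lerD2l p_lip.
Qed.

Lemma gradF_lipschitz_l x l l' :
  `|gradF r p x l - gradF r p x l'| <= `|r| * (\sum_(i < m) `|x - p i x|) * `|l - l'|.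
Proof.
rewrite /gradF -sumrB mulr_sumr mulr_suml.
apply: le_trans (ler_norm_sum _ _ _) _; apply: ler_sum => i _.
rewrite -scalerBl normrZ -mulrBr normrM normrN -mulrA (mulrC `|x - _|) mulrA.
apply: ler_wpM2r => //; apply: ler_wpM2l => //.
by have := row_entry_le_norm (l - l') i; rewrite !mxE.
Qed.

Lemma subdiffxE : subdiffx f r = fun z => [set gradF r p (lsubmx z) (rsubmx z)].
Proof.
apply/funext => z; apply: (limiting_subdiff_continuous (gradF r p ^~ (rsubmx z))).
  by move=> x; apply: regular_subdiff_Fsum.
exact: klipschitz_continuous (gradF_lipschitz_x (rsubmx z)).
Qed.

Lemma norm_sub_prox_le i x : `|x - p i x| <= (1 + L i) * `|x| + `|p i 0|.
Proof.
apply: le_trans (ler_normB _ _) _; rewrite mulrDl mul1r -addrA lerD2l.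
rewrite -[p i x](subrK (p i 0)); apply: le_trans (ler_normD _ _) _.
by rewrite lerD2r (le_trans (p_lip _ _ _)) // subr0.
Qed.

Lemma gradF_locally_lipschitz (z0 : 'rV[R]_(n + m)) :
  exists2 C : R, 0 <= C & forall z z' : 'rV[R]_(n + m),
    `|z - z0| <= 1 -> `|z' - z0| <= 1 ->
    `|gradF r p (lsubmx z') (rsubmx z') - gradF r p (lsubmx z) (rsubmx z)|
      <= C * `|z' - z|.
Proof.
set ρ := `|z0| + 1; have ρ0 : 0 <= ρ by rewrite addr_ge0.
have ΣL0 : 0 <= \sum_(i < m) (1 + L i) by apply: sumr_ge0 => i _; rewrite addr_ge0.
exists (`|r| * ρ * (\sum_(i < m) (1 + L i))
        + `|r| * \sum_(i < m) ((1 + L i) * ρ + `|p i 0|)) => [|z z' zz0 z'z0].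
  by rewrite addr_ge0 ?mulr_ge0 ?sumr_ge0 // => i _; rewrite addr_ge0 ?mulr_ge0 ?addr_ge0.
have norm_le_ρ w : `|w - z0| <= 1 -> `|w| <= ρ.
  by move=> wz0; rewrite -(subrK z0 w) (le_trans (ler_normD _ _)) // addrC lerD2l.
set x := lsubmx z; set l := rsubmx z; set x' := lsubmx z'; set l' := rsubmx z'.
rewrite -(subrKA (gradF r p x l')) mulrDl; apply: le_trans (ler_normD _ _) (lerD _ _).
- apply: le_trans (gradF_lipschitz_x _ _ _) _.
  apply: ler_pM; rewrite ?mulr_ge0 //; last by rewrite -linearB norm_lsubmx_le.
  apply: ler_wpM2r => //; apply: ler_wpM2l => //.
  exact: le_trans (norm_rsubmx_le _) (norm_le_ρ _ z'z0).
- apply: le_trans (gradF_lipschitz_l _ _ _) _.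
  apply: ler_pM; rewrite ?mulr_ge0 ?sumr_ge0 //; last by rewrite -linearB norm_rsubmx_le.
  apply: ler_wpM2l => //; apply: ler_sum => i _.
  apply: le_trans (norm_sub_prox_le _ _) _; rewrite lerD2r; apply: ler_wpM2l.
    by rewrite addr_ge0.
  exact: le_trans (norm_lsubmx_le _) (norm_le_ρ _ zz0).
Qed.

End PartialGradient.

Section LipschitzGraph.
Context {R : realType} {a b : nat}.
Context {h : 'rV[R]_a -> 'rV[R]_b} {z0 : 'rV[R]_a} {C : R}.
Hypothesis C_ge0 : 0 <= C.
Hypothesis h_lip : forall z z', `|z - z0| <= 1 -> `|z' - z0| <= 1 ->
  `|h z' - h z| <= C * `|z' - z|.

Local Notation graph := (gph (fun z => [set h z])).

Lemma gph_funE w : graph w -> w = row_mx (lsubmx w) (h (lsubmx w)).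
Proof. by case=> z [_ [-> ->]]; rewrite row_mxKl. Qed.

Lemma graph_direction_bound [zs : 'rV[R]_a] [u dh : 'rV[R]_b] [t eps : R] :
  0 < t -> 0 <= eps -> `|dh| <= C * (t * `|zs|) ->
  dotv (row_mx zs u) (row_mx (t *: zs) dh) <= eps * enorm (row_mx (t *: zs) dh) ->
  `|zs| <= b%:R * C * `|u| + eps * ((a + b)%:R * (1 + C)).
Proof.
move=> t0 eps0 dh_le; rewrite dotv_row_mx dotvZr => key.
have C0 := C_ge0; set K := (a + b)%:R * (1 + C).
have [->|zs0] := eqVneq zs 0; first by rewrite normr0 addr_ge0 ?mulr_ge0 ?addr_ge0.
set q := t * `|zs| in dh_le *; have q0 : 0 < q by rewrite mulr_gt0 ?normr_gt0.
have zs_sq : q * `|zs| <= t * dotv zs zs.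
  rewrite /q -mulrA -expr2; apply: (ler_wpM2l (ltW t0)); exact: sqr_norm_le_dotvv.
have u_dh : - (q * (b%:R * C * `|u|)) <= dotv u dh.
  have := normr_dotv_le u dh; rewrite ler_norml => /andP[+ _].
  have := mulr_ge0 (ler0n _ b) (normr_ge0 u); nra.
have step_le : enorm (row_mx (t *: zs) dh) <= K * q.
  apply: le_trans (enorm_le_norm _) _; rewrite /K -mulrA; apply: ler_wpM2l => //.
  apply: le_trans (norm_row_mx_le _ _) _; rewrite normrZ gtr0_norm // -/q; lra.
have eps_step := ler_wpM2l eps0 step_le.
have : q * `|zs| <= q * (b%:R * C * `|u| + eps * K) by lra.
by rewrite ler_pM2l.
Qed.

(* Test the regular normal along the graph, in the direction (zs, h (z + t zs) - h z). *)
Lemma regular_normal_graph_bound z v : `|z - z0| <= 1 / 2 ->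
  regular_normal graph (row_mx z (h z)) v -> `|lsubmx v| <= b%:R * C * `|rsubmx v|.
Proof.
move=> zz0 [_]; have C1 : 0 < 1 + C by have := C_ge0; lra.
rewrite -[v]hsubmxK row_mxKl row_mxKr; move: (lsubmx v) (rsubmx v) => zs u normal.
set K := (a + b)%:R * (1 + C); have K0 : 0 <= K by rewrite mulr_ge0 ?addr_ge0.
apply/ler_addgt0Pr => e e0.
have eK : 0 < e / (K + 1) by rewrite divr_gt0 // ltr_pwDr.
have /nbhs_normP[δ δ0 near_z] := normal _ eK.
have c0 : 0 < Num.min (1 / 2) (δ / (1 + C)) by rewrite lt_min !divr_gt0 //; exact: δ0.
have [t t0] := exists_pos_mul_lt (normr_ge0 zs) c0.
rewrite lt_min => /andP[t_half t_δ].
set q := t * `|zs| in t_half t_δ *.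
set z' := z + t *: zs; set dh := h z' - h z.
have z'z : z' - z = t *: zs by rewrite addrAC subrr add0r.
have tzs : `|t *: zs| = q by rewrite normrZ gtr0_norm.
have z'z0 : `|z' - z0| <= 1.
  rewrite -(subrK z z') -addrA z'z; apply: le_trans (ler_normD _ _) _.
  by rewrite tzs; lra.
have dh_le : `|dh| <= C * q by rewrite -tzs -z'z; apply: h_lip => //; lra.
have step : row_mx z' (h z') - row_mx z (h z) = row_mx (t *: zs) dh.
  by rewrite opp_row_mx add_row_mx z'z.
have step_δ : `|row_mx z (h z) - row_mx z' (h z')| < δ.
  rewrite -opprB normrN step; apply: le_lt_trans (norm_row_mx_le _ _) _.
  by rewrite tzs; move: t_δ; rewrite ltr_pdivlMr //; lra.
have graph_z' : graph (row_mx z' (h z')) by exists z', (h z').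
have := near_z _ step_δ graph_z'; rewrite step.
move=> /(graph_direction_bound t0 (ltW eK) dh_le); rewrite -/K => /le_trans; apply.
rewrite lerD2l mulrAC ler_pdivrMr ?ltr_pwDr // ler_pM2l // lerDl //.
Qed.

Lemma limiting_normal_graph_bound y0 v :
  limiting_normal graph (row_mx z0 y0) v -> `|lsubmx v| <= b%:R * C * `|rsubmx v|.
Proof.
move=> [_ [zk [vk [zk_cvg vk_cvg normal_k]]]].
have lsubmx_cont : continuous (@lsubmx R 1 a b).
  apply: (@klipschitz_continuous _ _ _ _ 1) => x y.
  by rewrite mul1r -linearB norm_lsubmx_le.
have rsubmx_cont : continuous (@rsubmx R 1 a b).
  apply: (@klipschitz_continuous _ _ _ _ 1) => x y.
  by rewrite mul1r -linearB norm_rsubmx_le.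
have near_z0 : \forall k \near \oo, `|lsubmx (zk k) - z0| <= 1 / 2.
  have := cvg_comp _ _ zk_cvg (lsubmx_cont _); rewrite row_mxKl => /cvgr_dist_le.
  by move=> /(_ (1 / 2) _)/filterS; apply => // k; rewrite distrC.
have norm_r : `|rsubmx (vk k)| @[k --> \oo] --> `|rsubmx v|.
  exact: cvg_norm (cvg_comp _ _ vk_cvg (rsubmx_cont _)).
have norm_l : `|lsubmx (vk k)| @[k --> \oo] --> `|lsubmx v|.
  exact: cvg_norm (cvg_comp _ _ vk_cvg (lsubmx_cont _)).
rewrite -subr_ge0; apply: (cvgr_to_ge (cvgB (cvgMr norm_r) norm_l)).
near=> k; have [zk_graph _] := normal_k k.
rewrite subr_ge0; apply: (regular_normal_graph_bound (lsubmx (zk k))).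
  by near: k.
by rewrite -gph_funE.
Unshelve. all: by end_near.
Qed.

End LipschitzGraph.

Theorem mainTheorem3 (R : realType) (n m : nat)
  (f : 'I_m -> 'rV[R]_n -> \bar R) (r : R) :
  (forall i, proper_fun (f i)) ->
  (forall i, lower_semicontinuous (f i)) ->
  (forall i, prox_bounded (f i)) ->
  (forall i, (prox_threshold (f i) < r%:E)%E) ->
  (forall i, exists p : 'rV[R]_n -> 'rV[R]_n,
      (forall x, prox_map (f i) r x = [set p x]) /\ lipschitz p) ->
  forall (xb : 'rV[R]_n) (lb : 'rV[R]_m) (vb : 'rV[R]_n),
  subdiffx f r (row_mx xb lb) vb ->
  [/\ (forall l' : 'rV[R]_m,
         coderiv (subdiffx f r) (row_mx xb lb) vb 0 (row_mx 0 l') -> l' = 0),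
      (exists2 rho : R, 0 < rho &
         forall (x' v' : 'rV[R]_n) (l' : 'rV[R]_m), v' != 0 ->
           coderiv (subdiffx f r) (row_mx xb lb) vb v' (row_mx x' l') ->
           - rho * enorm v' ^+ 2 < dotv x' v')
    & exists2 U : set 'rV[R]_m, nbhs lb U &
        exists g : 'rV[R]_m -> 'rV[R]_n,
          {within U, continuous g} /\
          forall l, U l -> subdiffx f r (row_mx xb l) (g l)].
Proof.
move=> f_proper _ _ _ prox_lip xb lb vb _.
have f_gtNy i x : (-oo < f i x)%E by case: (f_proper i).
have [p p_spec] := choice prox_lip.
have prox_p i x : prox_map (f i) r x = [set p i x] by case: (p_spec i).
have /choice[L L_spec] i : exists c : R,
    0 <= c /\ forall x y, `|p i x - p i y| <= c * `|x - y|.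
  by have [_ /lipschitzP[c c0 pc]] := p_spec i; exists c.
have L_ge0 i : 0 <= L i by case: (L_spec i).
have p_lip i : forall x y, `|p i x - p i y| <= L i * `|x - y| by case: (L_spec i).
have [C C0 gradF_lip] := gradF_locally_lipschitz (r := r) p_lip L_ge0 (row_mx xb lb).
have bound := limiting_normal_graph_bound C0 gradF_lip.
rewrite /coderiv (subdiffxE f_gtNy prox_p p_lip L_ge0); split.
- move=> l' /bound; rewrite row_mxKl row_mxKr normrN normr0 mulr0 normr_le0.
  by move=> /eqP/(congr1 rsubmx); rewrite row_mxKr => ->; rewrite linear0.
- exists (n%:R * (n%:R * C) + 1) => [|x' v' l' v'0 /bound].
    by rewrite ltr_pwDr ?mulr_ge0.
  rewrite row_mxKl row_mxKr normrN => xl_le; apply: (dotv_lower_bound _ _ _ _ v'0).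
    by rewrite mulr_ge0.
  by apply: le_trans xl_le; rewrite -[x in `|x|](row_mxKl x' l') norm_lsubmx_le.
- exists setT; first exact: filterT.
  exists (gradF r p xb); split=> [|l _]; last by rewrite /= row_mxKl row_mxKr.
  by apply: continuous_subspaceT; exact: klipschitz_continuous (gradF_lipschitz_l xb).
Qed.
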